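(* Let $G$ be a graph with an odd number $n$ of vertices and stubbornness levels $\alpha_x\in(0,1)$. Let $\mathcal{S}=(S,\overline{S})$ be a good bisection of $G$ and let $u$ be a good vertex of $\mathcal{S}$. Then $G$ admits a subvertable belief assignment $\mathbf{b}$ such that $u$ is a swing vertex for $\mathbf{b}$.
   Context: $G$ is a finite simple undirected graph, $N(x)$ the neighbors of $x$. For vertex sets $A,B$, $W(A,B)$ is the number of edges with one endpoint in $A$ and the other in $B$ (singletons written without braces). $a_x=\lfloor\alpha_x/(1-\alpha_x)\rfloor$. A bisection $\mathcal{S}=(S,\overline{S})$ is a partition of the vertex set with $|S|=\frac{n+1}{2}$, $|\overline{S}|=\frac{n-1}{2}$. The deficiency is $\mathrm{def}_{\mathcal{S}}(x)=W(x,S)-W(x,\overline{S})$ if $x\in S$ and $W(x,\overline{S})-W(x,S)$ if $x\in\overline{S}$. $\mathcal{S}$ is good if (1) $\mathrm{def}_{\mathcal{S}}(x)\ge -a_x$ for all $x\in S$, and (2) some $u\in S$ has $\mathrm{def}_{\mathcal{S}}(u)\ge a_u+1$; such vertices $u$ are the good vertices of $\mathcal{S}$. Game: belief assignment $\mathbf{b}\in\{0,1\}^n$, state $\mathbf{s}\in\{0,1\}^n$, cost $c_i(\mathbf{s})=\alpha_i|\mathbf{s}(i)-\mathbf{b}(i)|+(1-\alpha_i)\sum_{j\in N(i)}|\mathbf{s}(i)-\mathbf{s}(j)|$; truthful state $\mathbf{s}=\mathbf{b}$; a best response move changes one player's opinion to the other value when this strictly lowers its cost; an equilibrium is a state where no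 single player can strictly lower its cost by switching. $(\mathbf{s}_{-i},a)$ denotes $\mathbf{s}$ with coordinate $i$ replaced by $a$. $\mathbf{b}$ is subvertable if a majority of vertices have belief $0$ and some sequence of best response moves from the truthful state reaches an equilibrium with a majority of opinion $1$. For a subvertable $\mathbf{b}$ with exactly $\frac{n+1}{2}$ vertices of belief $0$, a vertex $u$ is a swing vertex if: $\mathbf{b}(u)=0$; $c_u(\mathbf{b})>c_u(\mathbf{b}')$ with $\mathbf{b}'=(\mathbf{b}_{-u},1)$; and for every $x$ with $\mathbf{b}(x)=1$, $c_x(\mathbf{b}')\le c_x((\mathbf{b}'_{-x},0))$. *)

From HB Require Import structures.
From mathcomp Require Import all_boot all_order all_algebra.
From mathcomp Require Import reals.
Set Implicit Arguments. Unset Strict Implicit. Unset Printing Implicit Defensive.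
Import Order.TTheory GRing.Theory Num.Theory.
Local Open Scope ring_scope.

Section Defs.
Variables (R : realType) (T : finType).

Definition simple_graph (e : rel T) : Prop :=
  symmetric e /\ irreflexive e.

Definition nbhd (e : rel T) (x : T) : {set T} := [set y | e x y].

Definition W (e : rel T) (x : T) (A : {set T}) : nat := #|nbhd e x :&: A|.

Definition a_of (alpha : T -> R) (x : T) : int :=
  Num.floor (alpha x / (1 - alpha x)).

Definition deficiency (e : rel T) (S : {set T}) (x : T) : int :=
  if x \in S then (W e x S)%:Z - (W e x (~: S))%:Z
  else (W e x (~: S))%:Z - (W e x S)%:Z.

Definition bisection (S : {set T}) : Prop := (#|S|.*2 = #|T|.+1)%N.

Definition good_vertex (e : rel T) (alpha : T -> R) (S : {set T}) (u : T) :=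
  (u \in S) /\ deficiency e S u >= a_of alpha u + 1.

Definition good_bisection (e : rel T) (alpha : T -> R) (S : {set T}) : Prop :=
  bisection S /\
  (forall x, x \in S -> deficiency e S x >= - a_of alpha x) /\
  (exists u, good_vertex e alpha S u).

(* Opinions / beliefs: false = 0, true = 1. *)
Definition state := {ffun T -> bool}.

Definition bdist (p q : bool) : R := if p == q then 0 else 1.

Definition cost (e : rel T) (alpha : T -> R) (b s : state) (i : T) : R :=
  alpha i * bdist (s i) (b i)
  + (1 - alpha i) * \sum_(j in nbhd e i) bdist (s i) (s j).

Definition upd (s : state) (i : T) (a : bool) : state :=
  [ffun j => if j == i then a else s j].

Definition br_move (e : rel T) (alpha : T -> R) (b s s' : state) : Prop :=
  exists i, s' = upd s i (~~ s i) /\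
            cost e alpha b s' i < cost e alpha b s i.

Inductive br_reach (e : rel T) (alpha : T -> R) (b : state) : state -> state -> Prop :=
| br_refl s : br_reach e alpha b s s
| br_step s s' s'' : br_move e alpha b s s' -> br_reach e alpha b s' s'' ->
                     br_reach e alpha b s s''.

Definition equilibrium (e : rel T) (alpha : T -> R) (b s : state) : Prop :=
  forall i, ~ (cost e alpha b (upd s i (~~ s i)) i < cost e alpha b s i).

Definition majority (s : state) (v : bool) : Prop :=
  (#|T| < (#|[set x | s x == v]|).*2)%N.

Definition subvertable (e : rel T) (alpha : T -> R) (b : state) : Prop :=
  majority b false /\
  exists s, br_reach e alpha b b s /\ equilibrium e alpha b s /\ majority s true.

Definition swing_vertex (e : rel T) (alpha : T -> R) (b : state) (u : T) : Prop :=
  subvertable e alpha b /\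
  ((#|[set x | b x == false]|).*2 = #|T|.+1)%N /\
  b u = false /\
  cost e alpha b (upd b u true) u < cost e alpha b b u /\
  (forall x, b x = true ->
     cost e alpha b (upd b u true) x <= cost e alpha b (upd (upd b u true) x false) x).

End Defs.

From HB Require Import structures.
From mathcomp Require Import all_boot all_order all_algebra.
From mathcomp Require Import reals.
From mathcomp Require Import lra zify.
Set Implicit Arguments. Unset Strict Implicit. Unset Printing Implicit Defensive.
Import Order.TTheory GRing.Theory Num.Theory.
Local Open Scope ring_scope.

(** Take the beliefs [b] that are [1] exactly on [S \ {u}]. In the truthful
    state [u] gains by switching to [1], since its deficiency exceeds [a_u];
    in the resulting state, the indicator of [S], no vertex of [S] wants to
    return to [0], since its deficiency is at least [-a_x]. From a state in
    which no [1]-vertex wants to switch, let [0]-vertices switch to [1] while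
    some of them strictly gains: switching to [0] only becomes less attractive
    as more neighbours hold [1], so this invariant persists, and the process
    stops after at most [n] moves in an equilibrium. That equilibrium still
    contains [S], a majority, so [b] is subvertable with swing vertex [u]. *)

Lemma floor_odds_lt (R : archiRealFieldType) (a : R) (d : int) : 0 < a < 1 ->
  (Num.floor (a / (1 - a)) < d) = (a < (1 - a) * d%:~R).
Proof.
case/andP=> _ a_lt1; have c_gt0 : 0 < 1 - a by rewrite subr_gt0.
by rewrite floor_lt_int ltr_pdivrMr // mulrC.
Qed.

Lemma floor_odds_geN (R : archiRealFieldType) (a : R) (d : int) : 0 < a < 1 ->
  (- Num.floor (a / (1 - a)) <= d) = (- a <= (1 - a) * d%:~R).
Proof.
case/andP=> _ a_lt1; have c_gt0 : 0 < 1 - a by rewrite subr_gt0.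
by rewrite lerNl floor_ge_int intrN ler_pdivlMr // mulNr lerNl mulrC.
Qed.

Section Upd.
Variable T : finType.

Lemma updE (s : state T) x a j : upd s x a j = if j == x then a else s j.
Proof. by rewrite ffunE. Qed.

Lemma upd_upd (s : state T) x a a' : upd (upd s x a) x a' = upd s x a'.
Proof. by apply/ffunP => j; rewrite !updE; case: eqP. Qed.

Lemma upd_id (s : state T) x a : s x = a -> upd s x a = s.
Proof. by move=> sx; apply/ffunP => j; rewrite updE; case: eqP => // ->. Qed.

Definition state_le (s s' : state T) := forall j, s j -> s' j.

Lemma state_le_upd_true (s : state T) x : state_le s (upd s x true).
Proof. by move=> j sj; rewrite updE; case: eqP. Qed.

Lemma zeros_upd_true (s : state T) x :
  [set j | ~~ upd s x true j] = [set j | ~~ s j] :\ x.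
Proof. by apply/setP => j; rewrite !inE updE; case: eqP. Qed.

Definition indicator (A : {set T}) : state T := [ffun x => x \in A].

End Upd.

Section Game.
Variables (R : realType) (T : finType) (e : rel T) (alpha : T -> R) (b : state T).
Hypothesis e_irr : irreflexive e.
Hypothesis alpha01 : forall x, 0 < alpha x < 1.

Local Notation cost := (cost e alpha b).

Definition disagree (s : state T) x a := #|[set j in nbhd e x | s j != a]|.

Lemma sum_bdist (s : state T) x a :
  \sum_(j in nbhd e x) bdist R a (s j) = (disagree s x a)%:R.
Proof.
rewrite (bigID (fun j => s j != a)) /= [X in _ + X]big1; last first.
  by move=> j /andP[_]; rewrite negbK /bdist => /eqP ->; rewrite eqxx.
rewrite addr0 (eq_bigr (fun _ => 1)); last first.
  by move=> j /andP[_ neq_ja]; rewrite /bdist eq_sym (negbTE neq_ja).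
by rewrite sumr_const; congr (_ *+ _); apply: eq_card => j; rewrite inE.
Qed.

Lemma costE (s : state T) x :
  cost s x = alpha x * bdist R (s x) (b x) + (1 - alpha x) * (disagree s x (s x))%:R.
Proof. by rewrite /cost sum_bdist. Qed.

Lemma disagree_upd (s : state T) x a a' : disagree (upd s x a) x a' = disagree s x a'.
Proof.
apply: eq_card => j; rewrite !inE updE.
by case: (j =P x) => // ->; rewrite e_irr.
Qed.

Lemma cost_updE (s : state T) x a : cost (upd s x a) x =
  alpha x * bdist R a (b x) + (1 - alpha x) * (disagree s x a)%:R.
Proof. by rewrite costE disagree_upd updE eqxx. Qed.

Lemma switch_false_gain_mono (s s' : state T) x : state_le s s' -> s x ->
  cost (upd s x false) x - cost s x <= cost (upd s' x false) x - cost s' x.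
Proof.
move=> le_ss' sx; have s'x := le_ss' x sx.
rewrite !cost_updE !costE sx s'x.
have c_ge0 : 0 <= 1 - alpha x by case/andP: (alpha01 x) => _ /ltW; rewrite subr_ge0.
have ones_le : (disagree s x false <= disagree s' x false)%N.
  apply/subset_leq_card/subsetP => j; rewrite !inE => /andP[-> /=].
  by case: (s j) (le_ss' j) => // ->.
have zeros_le : (disagree s' x true <= disagree s x true)%N.
  apply/subset_leq_card/subsetP => j; rewrite !inE => /andP[-> /=].
  by case: (s j) (le_ss' j) => // ->.
rewrite -(ler_nat R) in ones_le; rewrite -(ler_nat R) in zeros_le.
nra.
Qed.

Definition ones_stable (s : state T) :=
  forall x, s x -> cost s x <= cost (upd s x false) x.

Lemma ones_stable_upd_true (s : state T) x : ~~ s x ->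
  cost (upd s x true) x < cost s x -> ones_stable s -> ones_stable (upd s x true).
Proof.
move=> /negbTE sx gain_x stable_s y; have back : upd (upd s x true) x false = s.
  by rewrite upd_upd upd_id.
case: (y =P x) => [-> _ | /eqP neq_yx]; first by rewrite back ltW.
rewrite updE (negbTE neq_yx) => sy.
have := switch_false_gain_mono (@state_le_upd_true _ s x) sy.
have := stable_s y sy; lra.
Qed.

Lemma ones_stable_equilibrium (s : state T) : ones_stable s ->
  (forall x, ~~ s x -> ~ cost (upd s x true) x < cost s x) -> equilibrium e alpha b s.
Proof.
move=> stable_s no_gain x; case: (boolP (s x)) => [sx | /no_gain //].
by rewrite ltNge stable_s.
Qed.

Lemma ones_stable_reach_equilibrium (s : state T) : ones_stable s ->
  exists2 s', br_reach e alpha b s s' & equilibrium e alpha b s' /\ state_le s s'.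
Proof.
move: {2}#|_| (erefl #|[set j | ~~ s j]|) => n.
elim/ltn_ind: n s => n IH s card_zeros stable_s.
case: (pickP (fun x => ~~ s x && (cost (upd s x true) x < cost s x)))
  => [x /andP[sx gain_x] | no_gain].
  have fewer_zeros : (#|[set j | ~~ upd s x true j]| < n)%N.
    by rewrite -card_zeros zeros_upd_true (cardsD1 x [set j | ~~ s j]) inE sx.
  have [s' reach_s' [eq_s' le_s']] :=
    IH _ fewer_zeros _ erefl (ones_stable_upd_true sx gain_x stable_s).
  exists s'; last by split=> // j /state_le_upd_true /le_s'.
  by apply: br_step reach_s'; exists x; rewrite (negbTE sx).
exists s; [exact: br_refl | split=> //].
apply: ones_stable_equilibrium => // x /negbTE sx.
by move: (no_gain x); rewrite sx /= => ->.
Qed.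

End Game.

Lemma majority_of_bisection_le (T : finType) (S : {set T}) (s : state T) :
  bisection S -> state_le (indicator S) s -> majority s true.
Proof.
rewrite /bisection /majority => bisS le_s.
have : (#|S| <= #|[set x | s x == true]|)%N.
  by apply/subset_leq_card/subsetP => x xS; rewrite inE eqb_id le_s ?ffunE.
rewrite -leq_double; lia.
Qed.

Lemma card_zeros_upd_indicator (T : finType) (S : {set T}) u :
  bisection S -> u \in S ->
  (#|[set x | upd (indicator S) u false x == false]|).*2 = #|T|.+1.
Proof.
rewrite /bisection => bisS uS.
have -> : [set x | upd (indicator S) u false x == false] = u |: ~: S.
  by apply/setP => x; rewrite !inE updE ffunE; case: (x =P u) => // ->.
rewrite cardsU1 !inE uS /=.
rewrite -(cardsC S) -!muln2 in bisS *; lia.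
Qed.

Section Swing.
Variables (R : realType) (T : finType) (e : rel T) (alpha : T -> R).
Variables (S : {set T}) (u : T).
Hypothesis e_irr : irreflexive e.
Hypothesis alpha01 : forall x, 0 < alpha x < 1.

Local Notation b := (upd (indicator S) u false).
Local Notation cost := (cost e alpha b).

Lemma disagree_indicator_false x : disagree e (indicator S) x false = W e x S.
Proof. by apply: eq_card => j; rewrite !inE ffunE; case: (j \in S); rewrite ?andbT. Qed.

Lemma disagree_indicator_true x : disagree e (indicator S) x true = W e x (~: S).
Proof. by apply: eq_card => j; rewrite !inE ffunE; case: (j \in S); rewrite ?andbT. Qed.

Lemma deficiencyE x : x \in S ->
  (deficiency e S x)%:~R = (W e x S)%:R - (W e x (~: S))%:R :> R.
Proof. by rewrite /deficiency => ->; rewrite intrB !pmulrn. Qed.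

Lemma good_vertex_gain : good_vertex e alpha S u -> cost (indicator S) u < cost b u.
Proof.
case=> uS; rewrite lezD1 floor_odds_lt // deficiencyE // => gain.
rewrite cost_updE // costE ffunE uS updE eqxx disagree_indicator_false.
rewrite disagree_indicator_true /bdist /=; lra.
Qed.

Lemma indicator_ones_stable : good_vertex e alpha S u ->
  (forall x, x \in S -> - a_of alpha x <= deficiency e S x) ->
  ones_stable e alpha b (indicator S).
Proof.
move=> good_u def_ge x; rewrite ffunE => xS.
case: (x =P u) => [-> | /eqP neq_xu]; first exact/ltW/good_vertex_gain.
move: (def_ge x xS); rewrite floor_odds_geN // deficiencyE // => stay.
rewrite cost_updE // costE ffunE xS updE (negbTE neq_xu) ffunE xS.
rewrite disagree_indicator_false disagree_indicator_true /bdist /=; lra.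
Qed.

End Swing.

Theorem lemma1 (R : realType) (T : finType) (e : rel T) (alpha : T -> R)
    (S : {set T}) (u : T) :
  simple_graph e ->
  odd #|T| ->
  (forall x, 0 < alpha x < 1) ->
  good_bisection e alpha S ->
  good_vertex e alpha S u ->
  exists b : state T, subvertable e alpha b /\ swing_vertex e alpha b u.
Proof.
(* [odd #|T|] already follows from [bisection S]. *)
move=> [_ e_irr] _ alpha01 [bisS [def_ge _]] good_u; have uS := good_u.1.
set b := upd (indicator S) u false.
have back : upd b u true = indicator S by rewrite upd_upd upd_id ?ffunE.
have gain_u := good_vertex_gain e_irr alpha01 good_u.
have stable := indicator_ones_stable e_irr alpha01 good_u def_ge.
have [s reach_s [eq_s le_s]] := ones_stable_reach_equilibrium e_irr alpha01 stable.
have card_zeros := card_zeros_upd_indicator bisS uS.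
have subv : subvertable e alpha b.
  split; first by rewrite /majority card_zeros.
  exists s; split; last by split=> //; apply: majority_of_bisection_le le_s.
  by apply: br_step reach_s; exists u; rewrite updE eqxx back.
exists b; split=> //; split=> //; split=> //.
split; first by rewrite updE eqxx.
split; first by rewrite back.
by move=> x bx; rewrite back; apply: stable; move: bx; rewrite updE ffunE; case: eqP.
Qed.
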